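(* Let $p$ be a prime and $G$ a group of order $mp$ with $p\nmid m$, having a unique Sylow $p$-subgroup $P$. Suppose $G$ has a subgroup $M$ of order $m$ such that $p\nmid|\mathrm{Aut}(M)|$. Let $N$ be a regular subgroup of $\mathrm{Hol}(G)$ and, for $g\in G$, let $\nu(g)$ be the unique element of $N$ with $1^{\nu(g)}=g$; write $\nu(P)=\{\nu(x):x\in P\}$. Then: (1) $\nu(P)$ is a subgroup of $N$, hence a Sylow $p$-subgroup of $N$; (2) $\nu(P)\in\{\rho(P),\lambda(P)\}$; (3) $[\rho(G),\nu(P)]\le\nu(P)$.
   Context: Permutations act on the right, written exponentially. $S(G)$ is the permutation group of the set $G$; $\rho(g):x\mapsto xg$ and $\lambda(g):x\mapsto gx$; $\mathrm{Hol}(G)=N_{S(G)}(\rho(G))=\mathrm{Aut}(G)\rho(G)$, which also contains $\lambda(G)$. A subgroup of $S(G)$ is regular if it acts transitively with trivial point stabilisers. Commutators in $S(G)$: $[x,y]=x^{-1}y^{-1}xy$. *)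

From mathcomp Require Import all_boot all_fingroup all_solvable.
Set Implicit Arguments. Unset Strict Implicit. Unset Printing Implicit Defensive.
Local Open Scope group_scope.

(* The group G is the whole finGroupType gT (G = [set: gT]); S(G) = {perm gT},
   with MathComp's right action: (s * t) x = t (s x). *)
Section Holomorph.
Variable gT : finGroupType.

Definition rho (g : gT) : {perm gT} := perm (mulIg g).
Definition lambda (g : gT) : {perm gT} := perm (mulgI g).

Definition rhoG : {set {perm gT}} := [set rho g | g in [set: gT]].

Definition Hol : {set {perm gT}} := 'N(rhoG).

Definition regular (N : {set {perm gT}}) : Prop :=
  [transitive N, on [set: gT] | 'P] /\ forall x : gT, 'C_N[x | 'P] = 1.

Definition nu (N : {set {perm gT}}) (g : gT) : {perm gT} :=
  odflt 1 [pick n in N | n 1 == g].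

Definition nu_set (N : {set {perm gT}}) (A : {set gT}) : {set {perm gT}} :=
  [set nu N x | x in A].
End Holomorph.

From mathcomp Require Import all_boot all_fingroup all_solvable.
Set Implicit Arguments. Unset Strict Implicit. Unset Printing Implicit Defensive.
Local Open Scope group_scope.

(* For h in Hol(G) write h x = (hol_aut h x) (h 1) with hol_aut h in Aut(G). If h ^ p = 1,
   then hol_aut h has order dividing p; as |Aut P| = p - 1 and p does not divide |Aut M|, it
   is trivial on P and on G/P = M, so by Schur-Zassenhaus it is conjugation by some b in P;
   also h 1 lies in P. Hence n |-> n 1 maps a Sylow p-subgroup Q of the regular group N onto
   P, i.e. Q = nu(P), and in particular Q is normal in N. If q x = x^b c generates Q, the
   normality of <q> forces b = 1, or b c = 1, or b central in G, so q = rho(c) or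
   q = lambda(c). Finally rho(G) normalises rho(P) and centralises lambda(P). *)

Section Holomorph.
Variable gT : finGroupType.
Implicit Types (g x y : gT) (h s : {perm gT}).

Lemma rhoE g x : rho g x = x * g.
Proof. by rewrite permE. Qed.

Lemma lambdaE g x : lambda g x = g * x.
Proof. by rewrite permE. Qed.

Lemma rhoM : {morph @rho gT : x y / x * y}.
Proof. by move=> x y; apply/permP => z; rewrite permM !rhoE mulgA. Qed.

Lemma rho1 : rho 1 = 1 :> {perm gT}.
Proof. by apply/permP => z; rewrite rhoE perm1 mulg1. Qed.

Lemma rhoV g : rho g^-1 = (rho g)^-1.
Proof. by apply: (mulgI (rho g)); rewrite -rhoM !mulgV rho1. Qed.

Lemma rhoX g k : rho (g ^+ k) = rho g ^+ k.
Proof. by elim: k => [|k IHk]; rewrite ?rho1 // !expgSr rhoM IHk. Qed.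

Lemma lambdaX g k : lambda (g ^+ k) = lambda g ^+ k.
Proof.
elim: k => [|k IHk]; apply/permP => z; first by rewrite lambdaE perm1 mul1g.
by rewrite expgS [in RHS]expgSr permM -IHk !lambdaE mulgA.
Qed.

Lemma rhoJ g y : rho g ^ rho y = rho (g ^ y).
Proof. by rewrite !conjgE -rhoV -!rhoM. Qed.

Lemma commute_lambda_rho g y : commute (lambda g) (rho y).
Proof. by apply/permP => z; rewrite !permM !rhoE !lambdaE mulgA. Qed.

Lemma rhoG_norm_rho (A : {group gT}) :
  A <| [set: gT] -> rhoG gT \subset 'N((@rho gT) @: A).
Proof.
move=> nsA; apply/subsetP => _ /imsetP[g _ ->]; rewrite inE.
apply/subsetP => _ /imsetP[_ /imsetP[a Aa ->] ->].
by rewrite rhoJ imset_f // memJ_norm // (subsetP (normal_norm nsA)) ?inE.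
Qed.

Lemma rhoG_cent_lambda (A : {set gT}) : rhoG gT \subset 'C((@lambda gT) @: A).
Proof.
apply/centsP => _ /imsetP[g _ ->] _ /imsetP[a _ ->].
exact: commute_sym (commute_lambda_rho a g).
Qed.

Section AutomorphismOfWholeGroup.
Variables (a : {perm gT}) (aA : a \in Aut [set: gT]).

Lemma autTM : {morph a : x y / x * y}.
Proof. by move=> x y; rewrite -(autmE aA) morphM ?inE. Qed.

Lemma autT1 : a 1 = 1.
Proof. by rewrite -(autmE aA) morph1. Qed.

Lemma autTV x : a x^-1 = (a x)^-1.
Proof. by rewrite -(autmE aA) morphV ?inE. Qed.

Lemma autTX x k : a (x ^+ k) = a x ^+ k.
Proof. by rewrite -(autmE aA) morphX ?inE. Qed.

Lemma autTJ x y : a (x ^ y) = a x ^ a y.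
Proof. by rewrite -(autmE aA) morphJ ?inE. Qed.
End AutomorphismOfWholeGroup.

(* The Aut(G)-component of [h] in Hol(G) = Aut(G) rho(G): [h = hol_aut h * rho (h 1)]. *)
Definition hol_aut h : {perm gT} := h * rho (h 1)^-1.

Lemma hol_autE h x : hol_aut h x = h x * (h 1)^-1.
Proof. by rewrite permM rhoE. Qed.

Lemma hol_autEr h x : h x = hol_aut h x * h 1.
Proof. by rewrite hol_autE mulgKV. Qed.

Lemma hol_aut_Aut h : h \in Hol gT -> hol_aut h \in Aut [set: gT].
Proof.
move=> hH; rewrite inE; apply/andP; split; first by apply/subsetP => x; rewrite inE.
apply/morphicP => x y _ _.
have /imsetP[g _ hyE] : rho y ^ h \in rhoG gT by rewrite memJ_norm ?imset_f.
have hMr z : h (z * y) = h z * g.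
  have := congr1 (fun s : {perm gT} => s (h z)) hyE.
  by rewrite /= conjgE !permM permK !rhoE.
have hyE' : h y = h 1 * g by rewrite -hMr mul1g.
by rewrite !hol_autE hMr hyE' !mulgA mulgKV.
Qed.

Lemma hol_aut1 : hol_aut 1 = 1.
Proof. by apply/permP => x; rewrite hol_autE !perm1 invg1 mulg1. Qed.

Lemma hol_autM s h : h \in Hol gT -> hol_aut (s * h) = hol_aut s * hol_aut h.
Proof.
move=> /hol_aut_Aut aA; apply/permP => x.
by rewrite permM (hol_autE s) autTM // autTV // !hol_autE !permM invMg invgK !mulgA mulgKV.
Qed.

Lemma hol_autX h k : h \in Hol gT -> hol_aut (h ^+ k) = hol_aut h ^+ k.
Proof.
move=> hH; elim: k => [|k IHk]; first by rewrite !expg0 hol_aut1.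
by rewrite !expgSr hol_autM // IHk.
Qed.
End Holomorph.

Lemma coprime_Aut_fix (gT : finGroupType) (A : {group gT}) (f : gT -> gT) k :
    {in A &, {morph f : x y / x * y}} -> f @: A \subset A -> {in A &, injective f} ->
    {in A, forall x, iter k f x = x} -> coprime k #|Aut A| -> {in A, f =1 id}.
Proof.
move=> fM fA f_inj fk coAk.
pose fm := Morphism fM.
have injf : 'injm fm by apply/injmP.
have fmA : fm @* A = A by apply/morphim_fixP; rewrite ?morphimEdom.
pose a := aut injf fmA; have aA : a \in Aut A := Aut_aut injf fmA.
have iter_a x j : x \in A -> iter j f x \in A /\ (a ^+ j) x = iter j f x.
  move=> Ax; elim: j => [|j [fjA IHj]]; first by split; rewrite // expg0 perm1.
  by rewrite expgSr permM IHj autE //=; split; rewrite // (subsetP fA) ?imset_f.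
have ak1 : a ^+ k = 1.
  apply: (eq_Aut (groupX k aA) (group1 _)) => x Ax.
  by have [_ ->] := iter_a x k Ax; rewrite fk // perm1.
have a1 : a = 1.
  apply/eqP; rewrite -order_eq1 -dvdn1 -(eqnP coAk) dvdn_gcd order_dvdG //.
  by rewrite order_dvdn ak1 eqxx.
by move=> x Ax; rewrite -[f x]/(fm x) -(autE injf fmA Ax) -/a a1 perm1.
Qed.

Section RegularSubgroup.
Variables (gT : finGroupType) (N : {group {perm gT}}).
Hypothesis regN : regular N.
Implicit Types (g x : gT) (n : {perm gT}).

Lemma regular_inj n n' x : n \in N -> n' \in N -> n x = n' x -> n = n'.
Proof.
move=> Nn Nn' nxE; have [_ stabN] := regN.
have : n * n'^-1 \in 'C_N[x | 'P].
  by rewrite inE groupM ?groupV //; apply/astab1P; rewrite /= apermE permM nxE permK.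
by rewrite stabN => /set1P/eqP; rewrite -eq_mulgV1 => /eqP.
Qed.

Lemma nuP g : nu N g \in N /\ nu N g 1 = g.
Proof.
rewrite /nu; case: pickP => [n /andP[Nn /eqP] // | noN].
have [transN _] := regN.
have [n Nn n1E] := atransP2 transN (in_setT 1) (in_setT g).
by have := noN n; rewrite Nn n1E /= apermE eqxx.
Qed.

Lemma nu_uniq n : n \in N -> nu N (n 1) = n.
Proof. by move=> Nn; have [Nnu nu1] := nuP (n 1); apply: (regular_inj (x := 1)). Qed.

Lemma card_regular : #|N| = #|[set: gT]|.
Proof.
have [transN stabN] := regN; have := card_orbit_stab 'P N 1.
by rewrite (atransP transN) ?inE // stabN cards1 muln1.
Qed.

Lemma nu_set_cycleE (f : gT -> {perm gT}) g :
    (forall k, f (g ^+ k) = f g ^+ k) -> (forall x, f x 1 = x) -> f g \in N ->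
  nu_set N <[g]> = f @: <[g]>.
Proof.
move=> fX f1 Nfg; apply: eq_in_imset => _ /cycleP[k ->].
by rewrite -{1}(f1 (g ^+ k)) nu_uniq // fX groupX.
Qed.
End RegularSubgroup.

Section NormalCyclicSylow.
Variables (gT : finGroupType) (p : nat) (P M : {group gT}).
Hypotheses (p_pr : prime p) (oP : #|P| = p) (nsPG : P <| [set: gT])
  (complM : M \in [complements to P in [set: gT]]) (p'M : ~~ (p %| #|M|))
  (p'AutM : ~~ (p %| #|Aut M|)).
Implicit Types (x y u : gT) (a q : {perm gT}).

Local Notation rem := (remgr P M).

Let tiPM : P :&: M = 1. Proof. by case/complP: complM. Qed.
Let mulPM : P * M = [set: gT]. Proof. by case/complP: complM. Qed.

Lemma P_abelian : abelian P.
Proof. by apply/cyclic_abelian/prime_cyclic; rewrite oP. Qed.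

Let remM : {morph rem : x y / x * y}.
Proof. by move=> x y; rewrite (remgrM complM nsPG) ?inE. Qed.

Let rem1 : rem 1 = 1.
Proof. exact: remgr1. Qed.

Let remV x : rem x^-1 = (rem x)^-1.
Proof. by apply: (mulgI (rem x)); rewrite -remM !mulgV rem1. Qed.

Let remX x k : rem (x ^+ k) = rem x ^+ k.
Proof. by elim: k => [|k IHk]; rewrite ?rem1 // !expgSr remM IHk. Qed.

Let mem_rem x : rem x \in M.
Proof. by rewrite mem_remgr ?mulPM ?inE. Qed.

Let rem_eq1 x : (rem x == 1) = (x \in P).
Proof.
apply/eqP/idP => [remx1 | /remgr1 //].
by rewrite (divgr_eq P M x) remx1 mulg1 mem_divgr ?mulPM ?inE.
Qed.

Lemma M_expp_eq1 y : y \in M -> y ^+ p = 1 -> y = 1.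
Proof.
move=> My yp1; apply/eqP; rewrite -order_eq1 -dvdn1.
rewrite -(eqnP (_ : coprime p #|M|)) ?prime_coprime // dvdn_gcd order_dvdG //.
by rewrite order_dvdn yp1 eqxx.
Qed.

Lemma memP_expp x : (x \in P) = (x ^+ p == 1).
Proof.
apply/idP/eqP => [Px | xp1]; first by rewrite -oP expg_cardG.
by rewrite -rem_eq1 (M_expp_eq1 (mem_rem x)) // -remX xp1 rem1.
Qed.

Lemma Aut_memP a x : a \in Aut [set: gT] -> (a x \in P) = (x \in P).
Proof. by move=> aA; rewrite !memP_expp -autTX // -{1}(autT1 aA) (inj_eq perm_inj). Qed.

Lemma commute_P_generator g u y :
  u \in P -> u != 1 -> y \in P -> commute g u -> commute g y.
Proof.
move=> Pu u1 Py cgu.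
have : y \in <[u]> by rewrite -(nt_gen_prime (G := P) (x := u)) ?oP // !inE u1.
by case/cycleP => i ->; apply: commuteX.
Qed.

Lemma conj_rmul_expE q (b c : gT) : b \in P -> c \in P -> (forall x, q x = x ^ b * c) ->
  forall k x, (q ^+ k) x = x ^ (b ^+ k) * c ^+ k.
Proof.
move=> Pb Pc qE k x; elim: k => [|k IHk]; first by rewrite perm1 conjg1 mulg1.
have ckE : (c ^+ k) ^ b = c ^+ k.
  by rewrite conjgE (centsP P_abelian _ (groupX k Pc) _ Pb) mulKg.
by rewrite expgSr permM IHk qE conjMg -conjgM ckE -mulgA -!expgSr.
Qed.

Section PElementOfAut.
Variable a : {perm gT}.
Hypotheses (aA : a \in Aut [set: gT]) (ap1 : a ^+ p = 1).

Lemma Aut_p_fixes_P : {in P, a =1 id}.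
Proof.
apply: (coprime_Aut_fix (k := p)).
- exact: in2W (autTM aA).
- by apply/subsetP => _ /imsetP[u Pu ->]; rewrite Aut_memP.
- exact: in2W perm_inj.
- by move=> u _; rewrite -permX ap1 perm1.
rewrite card_Aut_cyclic ?prime_cyclic ?oP // totient_prime //.
by rewrite -{1}(prednK (prime_gt0 p_pr)) coprimeSn.
Qed.

Lemma Aut_p_rem x : rem (a x) = rem x.
Proof.
(* [psi] is the automorphism of M, i.e. of G/P, induced by [a]. *)
pose psi y := rem (a y).
have psi_rem z : psi (rem z) = psi z.
  have Pad : a (divgr P M z) \in P by rewrite Aut_memP // mem_divgr ?mulPM ?inE.
  by rewrite /psi {2}(divgr_eq P M z) autTM // remM (remgr1 _ Pad) mul1g.
have psi_id : {in M, psi =1 id}.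
  apply: (coprime_Aut_fix (k := p)).
  - by move=> y z _ _; rewrite /psi autTM // remM.
  - by apply/subsetP => _ /imsetP[y _ ->]; apply: mem_rem.
  - move=> y z My Mz /eqP; rewrite eq_mulgV1 -remV -remM -autTV // -autTM //.
    rewrite rem_eq1 Aut_memP // => Pyz; apply/eqP.
    by rewrite eq_mulgV1 (sameP eqP set1gP) -tiPM inE Pyz groupM ?groupV.
  - move=> y My; have iterE j : iter j psi y = rem ((a ^+ j) y).
      elim: j => [|j IHj] /=; first by rewrite perm1 remgr_id.
      by rewrite IHj psi_rem expgSr permM.
    by rewrite iterE ap1 perm1 remgr_id.
  by rewrite prime_coprime.
by rewrite -[LHS]/(psi x) -psi_rem psi_id ?mem_rem.
Qed.

Lemma Aut_p_conjg : exists2 b, b \in P & forall x, a x = x ^ b.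
Proof.
have [b Pb defMa] : exists2 b, b \in P & autm aA @* M :=: M :^ b.
  apply: SchurZassenhaus_trans_sol.
  - exact/abelian_sol/P_abelian.
  - exact: subset_trans (subsetT M) (normal_norm nsPG).
  - by rewrite mulPM subsetT.
  - by rewrite oP prime_coprime.
  by rewrite card_injm ?injm_autm ?subsetT.
have aM y : y \in M -> a y = y ^ b.
  move=> My; have : a y \in M :^ b by rewrite -defMa; apply: mem_morphim; rewrite ?inE.
  have rem_conj z : rem (z ^ b^-1) = rem z.
    by rewrite conjgE invgK !remM (remgr1 _ Pb) (remgr1 _ (groupVr Pb)) mul1g mulg1.
  rewrite mem_conjg => Mz; rewrite -(conjgKV b (a y)); congr (_ ^ b).
  by rewrite -(remgr_id tiPM Mz) rem_conj Aut_p_rem (remgr_id tiPM My).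
exists b => // x.
have Pd : divgr P M x \in P by rewrite mem_divgr ?mulPM ?inE.
have dbE : divgr P M x ^ b = divgr P M x.
  by move: (divgr P M x) Pd => d Pd; rewrite conjgE (centsP P_abelian _ Pd _ Pb) mulKg.
rewrite [in LHS](divgr_eq P M x) autTM // (Aut_p_fixes_P Pd) (aM _ (mem_rem x)) /=.
by rewrite -dbE -conjMg -divgr_eq.
Qed.
End PElementOfAut.

Section PElementOfHol.
Variable q : {perm gT}.
Hypotheses (qH : q \in Hol gT) (qp1 : q ^+ p = 1).

Let aA : hol_aut q \in Aut [set: gT] := hol_aut_Aut qH.
Let ap1 : hol_aut q ^+ p = 1. Proof. by rewrite -hol_autX // qp1 hol_aut1. Qed.

Lemma hol_p_elt1_in_P : q 1 \in P.
Proof.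
have rem_qX j : rem ((q ^+ j) 1) = rem (q 1) ^+ j.
  elim: j => [|j IHj]; first by rewrite perm1 rem1.
  by rewrite expgSr permM hol_autEr remM Aut_p_rem // IHj expgSr.
rewrite -rem_eq1; apply/eqP/M_expp_eq1; first exact: mem_rem.
by rewrite -rem_qX qp1 perm1 rem1.
Qed.

Lemma hol_p_eltE : exists2 b, b \in P & forall x, q x = x ^ b * q 1.
Proof.
have [b Pb aE] := Aut_p_conjg aA ap1.
by exists b => // x; rewrite hol_autEr aE.
Qed.
End PElementOfHol.

Lemma hol_conj_rmul_power q n k (b c : gT) :
    b \in P -> c \in P -> (forall x, q x = x ^ b * c) -> n \in Hol gT -> q ^ n = q ^+ k ->
  (forall x, x ^ hol_aut n b = x ^ (b ^+ k)) /\ hol_aut n c * n 1 = n 1 ^ (b ^+ k) * c ^+ k.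
Proof.
move=> Pb Pc qE Hn qnE; have aA := hol_aut_Aut Hn.
have key z : hol_aut n z ^ hol_aut n b * hol_aut n c * n 1
             = (hol_aut n z * n 1) ^ (b ^+ k) * c ^+ k.
  have nqE : n (q z) = (q ^+ k) (n z) by rewrite -qnE conjgE !permM permK.
  rewrite qE (conj_rmul_expE Pb Pc qE) (hol_autEr n (z ^ b * c)) (hol_autEr n z) in nqE.
  by rewrite -autTJ // -autTM.
have cE : hol_aut n c * n 1 = n 1 ^ (b ^+ k) * c ^+ k.
  by have := key 1; rewrite autT1 // conj1g !mul1g.
split=> // x; have := key ((hol_aut n)^-1 x).
by rewrite permKV conjMg -[RHS]mulgA -cE -mulgA => /mulIg.
Qed.

Section RegularSubgroupOfHol.
Variable N : {group {perm gT}}.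
Hypotheses (sNH : N \subset Hol gT) (regN : regular N).
Implicit Types (g : gT) (n : {perm gT}).

Lemma card_Sylow_regular (Q : {group {perm gT}}) : p.-Sylow(N) Q -> #|Q| = p.
Proof.
move=> sylQ; rewrite (card_Hall sylQ) card_regular // -mulPM TI_cardMg // oP.
rewrite partnM ?cardG_gt0 ?(prime_gt0 p_pr) //.
have p'M_nat : p^'.-nat #|M| by rewrite p'natE.
by rewrite (part_pnat_id (pnat_id p_pr)) (part_p'nat p'M_nat) muln1.
Qed.

Lemma nu_set_Sylow (Q : {group {perm gT}}) : p.-Sylow(N) Q -> nu_set N P = Q.
Proof.
move=> sylQ; have sQN := pHall_sub sylQ; have oQ := card_Sylow_regular sylQ.
have NQ q : q \in Q -> q \in N := subsetP sQN q.
have Q1P q : q \in Q -> q 1 \in P.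
  by move=> Qq; rewrite hol_p_elt1_in_P ?(subsetP sNH) ?NQ // -oQ expg_cardG.
have Q1_inj : {in Q &, injective (fun q : {perm gT} => q 1)}.
  by move=> q q' Qq Qq'; apply: (regular_inj regN (x := 1)); apply: NQ.
have Q1E : [set q 1 | q : {perm gT} in Q] = P.
  apply/eqP; rewrite eqEcard card_in_imset // oQ oP leqnn andbT.
  by apply/subsetP => _ /imsetP[q Qq ->]; apply: Q1P.
rewrite /nu_set -Q1E -imset_comp -[RHS]imset_id.
by apply: eq_in_imset => q Qq /=; rewrite nu_uniq ?NQ.
Qed.

Lemma Sylow_regular_norm (Q : {group {perm gT}}) : p.-Sylow(N) Q -> N \subset 'N(Q).
Proof.
move=> sylQ; apply/subsetP => n Nn; rewrite inE.
have sylQn : p.-Sylow(N) (Q :^ n)%G by rewrite pHallJ.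
by rewrite -(nu_set_Sylow sylQn) (nu_set_Sylow sylQ).
Qed.

Lemma normal_conj_rmul_commute q (b c : gT) g :
    q \in N -> N \subset 'N(<[q]>) -> b \in P -> c \in P ->
    (forall x, q x = x ^ b * c) -> b * c != 1 ->
  commute g b.
Proof.
move=> Nq nqN Pb Pc qE bc1.
have [-> | b1] := eqVneq b 1; first exact: commute1.
have [Nn n1] := nuP regN g; set n := nu N g in Nn n1.
have Hn := subsetP sNH n Nn; have aA := hol_aut_Aut Hn; set a := hol_aut n in aA.
have [k qnE] : exists k, q ^ n = q ^+ k.
  by apply/cycleP; rewrite memJ_norm ?cycle_id ?(subsetP nqN).
have [abE acE] := hol_conj_rmul_power Pb Pc qE Hn qnE; rewrite -/a n1 in abE acE.
(* Either [d] is a nontrivial central element of P, or [a] acts on P as u |-> u ^+ k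
   and [g] commutes with [(b * c) ^+ k], which is nontrivial since [b * c] is. *)
pose d := a b * (b ^+ k)^-1.
have Pd : d \in P by rewrite groupM ?groupV ?groupX ?Aut_memP.
have [d1 | d1] := eqVneq d 1; last first.
  apply: (commute_P_generator Pd d1 Pb).
  by rewrite /commute conjgC conjgM abE conjgK.
have abE' : a b = b ^+ k by apply/eqP; rewrite eq_mulgV1 -/d d1.
pose e := (b * c) ^+ k.
have Pe : e \in P by rewrite groupX ?groupM.
have [j bcE] : exists j, b * c = b ^+ j.
  by apply/cycleP; rewrite -(nt_gen_prime (G := P)) ?oP ?groupM // !inE b1.
have aeE : a (b * c) = e by rewrite /e bcE autTX // abE' -!expgM mulnC.
apply: (commute_P_generator Pe _ Pb); last first.
  rewrite /commute -{2}aeE autTM // -mulgA acE abE' mulgA conjgE mulKVg -mulgA.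
  by rewrite -expgMn //; apply: (centsP P_abelian).
apply: contraNneq bc1 => e1; apply/eqP; apply: (@perm_inj _ a).
by rewrite aeE e1 autT1.
Qed.

Lemma normal_conj_rmul_rho_lambda q (b c : gT) :
    q \in N -> N \subset 'N(<[q]>) -> b \in P -> c \in P ->
    (forall x, q x = x ^ b * c) ->
  q = rho c \/ q = lambda c.
Proof.
move=> Nq nqN Pb Pc qE; have [bc1 | bc1] := eqVneq (b * c) 1.
  right; apply/permP => x; have cE : c = b^-1 by rewrite -(mulKg b c) bc1 mulg1.
  by rewrite qE lambdaE cE conjgE -mulgA mulgK.
left; apply/permP => x.
by rewrite qE rhoE conjgE (normal_conj_rmul_commute x Nq nqN Pb Pc qE bc1) mulKg.
Qed.

Lemma nu_set_P_Sylow : p.-Sylow(N) (nu_set N P) /\ group_set (nu_set N P).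
Proof.
have [Q sylQ] := Sylow_exists p N.
by rewrite (nu_set_Sylow sylQ); split; last exact: groupP.
Qed.

Lemma nu_set_P_rho_lambda : nu_set N P = (@rho gT) @: P \/ nu_set N P = (@lambda gT) @: P.
Proof.
have [Q sylQ] := Sylow_exists p N; have QE := nu_set_Sylow sylQ.
have oQ := card_Sylow_regular sylQ.
have /trivgPn[c Pc c1] : P :!=: 1 by rewrite -cardG_gt1 oP prime_gt1.
have [Nq q1] := nuP regN c; set q := nu N c in Nq q1.
have Qq : q \in Q by rewrite -QE imset_f.
have qp1 : q ^+ p = 1 by rewrite -oQ expg_cardG.
have [b Pb qE] := hol_p_eltE (subsetP sNH q Nq) qp1.
have Qcyc : Q :=: <[q]>.
  apply: nt_gen_prime; rewrite ?oQ // !inE Qq andbT.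
  by apply: contraNneq c1 => q_1; rewrite -q1 q_1 perm1.
have nqN : N \subset 'N(<[q]>) by rewrite -Qcyc Sylow_regular_norm.
have Pcyc : P :=: <[c]> by apply: nt_gen_prime; rewrite ?oP // !inE c1.
rewrite q1 in qE; rewrite Pcyc.
case: (normal_conj_rmul_rho_lambda Nq nqN Pb Pc qE) => qE'; [left | right].
  by apply: (nu_set_cycleE regN) => [k | x |]; rewrite ?rhoX ?rhoE ?mul1g -?qE'.
by apply: (nu_set_cycleE regN) => [k | x |]; rewrite ?lambdaX ?lambdaE ?mulg1 -?qE'.
Qed.

Lemma commg_rhoG_nu_set_P : [~: rhoG gT, nu_set N P] \subset nu_set N P.
Proof.
have [Q sylQ] := Sylow_exists p N; rewrite (nu_set_Sylow sylQ).
apply: subset_trans (commSg _ (subset_gen _)) _; rewrite commg_subr gen_subG.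
rewrite -(nu_set_Sylow sylQ); case: nu_set_P_rho_lambda => ->.
  exact: rhoG_norm_rho.
exact: subset_trans (rhoG_cent_lambda _) (cent_sub _).
Qed.
End RegularSubgroupOfHol.
End NormalCyclicSylow.

Lemma unique_Sylow_complement (gT : finGroupType) (p m : nat) (P M : {group gT}) :
    prime p -> #|[set: gT]| = (m * p)%N -> ~~ (p %| m) ->
    'Syl_p([set: gT]) = [set P] -> #|M| = m ->
  [/\ #|P| = p, P <| [set: gT] & M \in [complements to P in [set: gT]]].
Proof.
move=> p_pr oG p'm SylP oM.
have sylP : p.-Sylow([set: gT]) P by have := set11 P; rewrite -SylP inE.
have oP : #|P| = p.
  have m_gt0 : 0 < m by move: (cardG_gt0 [set: gT]); rewrite oG muln_gt0 => /andP[].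
  rewrite (card_Hall sylP) oG partnM ?(prime_gt0 p_pr) //.
  have p'm_nat : p^'.-nat m by rewrite p'natE.
  by rewrite (part_pnat_id (pnat_id p_pr)) (part_p'nat p'm_nat) mul1n.
have nsPG : P <| [set: gT].
  have : #|'Syl_p([set: gT])| == 1%N by rewrite SylP cards1.
  case/normal_sylowP => Q sylQ nsQ.
  have : Q \in 'Syl_p([set: gT]) by rewrite inE.
  by rewrite SylP => /set1P <-.
have tiPM : P :&: M = 1 by rewrite coprime_TIg // oP oM prime_coprime.
split=> //; apply/complP; split=> //.
by apply/eqP; rewrite eqEcard subsetT oG TI_cardMg // oP oM mulnC leqnn.
Qed.

Theorem mainTheorem18 (gT : finGroupType) (p m : nat) (P M : {group gT})
    (N : {group {perm gT}}) :
  prime p ->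
  #|[set: gT]| = (m * p)%N ->
  ~~ (p %| m) ->
  'Syl_p([set: gT]) = [set P] ->
  #|M| = m ->
  ~~ (p %| #|Aut M|) ->
  N \subset Hol gT ->
  regular N ->
  [/\ group_set (nu_set N P) /\ nu_set N P \subset N,
      p.-Sylow(N) (nu_set N P),
      nu_set N P = (@rho gT) @: P \/ nu_set N P = (@lambda gT) @: P
    & [~: rhoG gT, nu_set N P] \subset nu_set N P].
Proof.
move=> p_pr oG p'm SylP oM p'AutM sNH regN.
have [oP nsPG complM] := unique_Sylow_complement p_pr oG p'm SylP oM.
rewrite -oM in p'm.
have [sylNP grpNP] := nu_set_P_Sylow p_pr oP nsPG complM p'm p'AutM sNH regN.
split; [split=> //; exact: pHall_sub sylNP | by [] | |].
- exact (nu_set_P_rho_lambda p_pr oP nsPG complM p'm p'AutM sNH regN).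
- exact (commg_rhoG_nu_set_P p_pr oP nsPG complM p'm p'AutM sNH regN).
Qed.
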